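(* Let $(X,p)$ and $(Y,d)$ be metric spaces with $(Y,d)$ separable, and let $F: X \Rightarrow Y$ be a (total) multi-valued function. Let $P \subseteq X$ be the set of points $x \in X$ at which $F$ is continuous. (a) If $F(x)$ is compact for every $x \in X$, then $P$ is a $\Pi^0_2$ (i.e. $G_\delta$) subset of $X$. (b) If $Y$ is exhaustible by compact sets and $F(x)$ is closed for every $x \in X$, then $P$ is a $\Sigma^0_3$ subset of $X$.
   Context: A multi-valued function $F: X \Rightarrow Y$ assigns to each $x\in X$ a set $F(x)\subseteq Y$; it is identified with its graph $\{(x,y): y \in F(x)\}\subseteq X\times Y$, and all multi-valued functions are assumed total, i.e. $F(x)\neq\emptyset$ for all $x$. $F$ is continuous at $x$ if there is some $y \in F(x)$ such that for every $\varepsilon>0$ there is $\delta>0$ such that for every $x' \in B_p(x,\delta)$ there is $y' \in F(x')$ with $d(y,y')<\varepsilon$. A space $Y$ is exhaustible by compact sets if there are compact sets $K_n \subseteq Y$ ($n\in\omega$) with $K_n$ contained in the interior of $K_{n+1}$ for all $n$ and $Y=\bigcup_n K_n$. Borel hierarchy: $\Sigma^0_1$ = open sets; $\Sigma^0_{n+1}$ = countable unions $\bigcup_i A_i$ where each $X\setminus A_i\in\Sigma^0_{k_i}$ for some $k_i\le n$; $\Pi^0_n$ = complements of $\Sigma^0_n$ sets. Thus $\Pi^0_2$ = $G_\delta$ and $\Sigma^0_3$ = countable unions of $G_\delta$ sets. *)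

From HB Require Import structures.
From mathcomp Require Import all_boot all_order all_algebra.
From mathcomp Require Import all_classical all_reals all_analysis.
From mathcomp Require Import borel_hierarchy.
Set Implicit Arguments. Unset Strict Implicit. Unset Printing Implicit Defensive.
Import Order.TTheory GRing.Theory Num.Theory.
Import numFieldNormedType.Exports.
Local Open Scope classical_set_scope.
Local Open Scope ring_scope.

Definition separable_sp (T : topologicalType) : Prop :=
  exists D : set T, countable D /\ dense D.

Definition exhaustible_by_compacts (T : topologicalType) : Prop :=
  exists K : (set T)^nat,
    (forall n, compact (K n)) /\
    (forall n, K n `<=` interior (K n.+1)) /\
    \bigcup_n K n = setT.

Definition mv_total (X Y : Type) (F : X -> set Y) : Prop :=
  forall x, F x !=set0.

(* Continuity of a multi-valued function at x (metric definition, with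
   B_p(x,delta) = ball x delta and d(y,y') < eps as ball y eps y'). *)
Definition mv_continuous_at (R : realType) (X Y : pseudoMetricType R)
  (F : X -> set Y) (x : X) : Prop :=
  exists2 y, F x y &
    forall eps : R, 0 < eps -> exists2 delta : R, 0 < delta &
      forall x', ball x delta x' -> exists2 y', F x' y' & ball y eps y'.

Definition mv_continuity_points (R : realType) (X Y : pseudoMetricType R)
  (F : X -> set Y) : set X := [set x | mv_continuous_at F x].

Definition Sigma03 (T : topologicalType) (S : set T) : Prop :=
  exists2 A : (set T)^nat, (forall i, Gdelta (A i)) & S = \bigcup_i A i.

(** Continuity of F at x means that F x meets the lower limit of F at x,
    the set of y such that F x' meets every ball around y for all x' near x.
    For any U, the points x near which F meets some ball of radius 1/(n+1)
    inside U, for every n, form a G_delta set.  A lower limit point with a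
    neighbourhood in U is such a ball centre for every n; conversely, if
    F x `&` U lies in a compact K, the centres can be moved into F x `&` U,
    and a cluster point of them in K is a lower limit point.  Taking U = Y
    and K = F x gives (a); taking U = the interior of K_m gives (b), where
    closedness of F x puts the cluster point into F x. *)
From HB Require Import structures.
From mathcomp Require Import all_boot all_order all_algebra.
From mathcomp Require Import all_classical all_reals all_analysis.
From mathcomp Require Import borel_hierarchy.
Import Order.TTheory GRing.Theory Num.Theory.
Import numFieldNormedType.Exports.
Local Open Scope classical_set_scope.
Local Open Scope ring_scope.

Section LowerLimit.
Context {R : realType} {X Y : pseudoMetricType R} (F : X -> set Y).

Definition lower_inverse (U : set Y) : set X := [set x | F x `&` U !=set0].

Definition lower_limit (x : X) : set Y :=
  [set y | forall e, 0 < e -> \forall x' \near x, lower_inverse (ball y e) x'].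

Definition hits_small_balls (U : set Y) : set X :=
  \bigcap_n \bigcup_y interior (lower_inverse (ball y n.+1%:R^-1 `&` U)).

Lemma lower_inverseS (U V : set Y) :
  U `<=` V -> lower_inverse U `<=` lower_inverse V.
Proof. by move=> UV x [y [Fy Uy]]; exists y; split=> //; apply: UV. Qed.

Lemma mv_continuous_atE x :
  mv_continuous_at F x <-> F x `&` lower_limit x !=set0.
Proof.
split=> [[y Fy cont]|[y [Fy ly]]]; exists y => //; first split=> // e /cont.
  move=> [d d0 Fd]; apply/nbhs_ballP; exists d => // x' /Fd [y' Fy' By'].
  by exists y'.
move=> e /ly /nbhs_ballP [d d0 Fd]; exists d => // x' /Fd [y' [Fy' By']].
by exists y'.
Qed.

Lemma lower_limit_closure x : lower_limit x `<=` closure (F x).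
Proof.
move=> y ly B /nbhs_ballP [e e0 eB].
have [z [Fz yz]] := nbhs_singleton (ly e e0).
by exists z; split=> //; apply: eB.
Qed.

Lemma Gdelta_hits_small_balls U : Gdelta (hits_small_balls U).
Proof.
eexists => // n; apply: bigcup_open => y _; exact: open_interior.
Qed.

Lemma lower_limit_hits_small_balls x y U :
  lower_limit x y -> nbhs y U -> hits_small_balls U x.
Proof.
move=> ly /nbhs_ballP [r r0 rU] n _; exists y => //.
pose s := Order.min r n.+1%:R^-1.
have s0 : 0 < s by rewrite lt_min r0 invr_gt0 ltr0n.
apply: filterS (ly s s0); apply: lower_inverseS => z ys; split.
  by apply: le_ball ys; rewrite ge_min lexx orbT.
by apply: rU; apply: le_ball ys; rewrite ge_min lexx.
Qed.

Lemma compact_meets_lower_limit (K : set Y) x : compact K ->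
  (forall e, 0 < e ->
    exists2 z, K z & \forall x' \near x, lower_inverse (ball z e) x') ->
  K `&` lower_limit x !=set0.
Proof.
move=> cK centres.
(* the sets of centres for radius e > 0 form a proper filter on K *)
pose S e := [set z | K z /\ \forall x' \near x, lower_inverse (ball z e) x'].
pose G := filter_from [set e : R | 0 < e] S.
have G_proper : ProperFilter G.
  apply: filter_from_proper => [|e /centres [z Kz near_z]]; last by exists z.
  apply: filter_from_filter; first by exists 1; rewrite /= ltr01.
  move=> i j i0 j0; exists (Order.min i j); first by rewrite /= lt_min i0 j0.
  move=> z [Kz near_z]; split; split=> //; apply: filterS near_z;
    apply: lower_inverseS; apply: le_ball; by rewrite ge_min lexx ?orbT.
have GK : G K by exists 1; [rewrite /= ltr01 | move=> z []].
have [y [Ky cluster_y]] := cK G G_proper GK.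
exists y; split=> // e e0.
have e20 : 0 < e / 2 by rewrite divr_gt0.
have GS : G (S (e / 2)) by exists (e / 2).
have [z [[_ near_z] yz]] := cluster_y _ _ GS (nbhsx_ballx y _ e20).
by apply: filterS near_z; apply: lower_inverseS => w; exact: ball_split yz.
Qed.

Lemma hits_small_balls_lower_limit (K U : set Y) x : compact K ->
  F x `&` U `<=` K -> hits_small_balls U x -> K `&` lower_limit x !=set0.
Proof.
move=> cK FUK hx; apply: compact_meets_lower_limit cK _ => e e0.
have [n] : exists n : nat, 0 + n.+1%:R^-1 < e / 2.
  by apply: ltr_add_invr; rewrite divr_gt0.
rewrite add0r => ne; have [y _ near_y] := hx n I.
(* a point z hit at x itself is within 2/(n+1) < e of every point of the ball *)
have [z [Fz [yz Uz]]] := nbhs_singleton near_y.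
exists z; first exact: FUK.
apply: filterS near_y; apply: lower_inverseS => w [yw _].
have zy : ball z (e / 2) y by apply: le_ball (ball_sym yz); exact: ltW.
by apply: ball_split zy _; apply: le_ball yw; exact: ltW.
Qed.

End LowerLimit.

Theorem theorem2p1 (R : realType) (X Y : pseudoMetricType R) (F : X -> set Y) :
  hausdorff_space X -> hausdorff_space Y ->
  separable_sp Y -> mv_total F ->
  ((forall x, compact (F x)) -> Gdelta (mv_continuity_points F)) /\
  (exhaustible_by_compacts Y -> (forall x, closed (F x)) ->
     Sigma03 (mv_continuity_points F)).
Proof.
move=> _ _ _ _; split=> [cF|[K [cK [KK KT]]] clF].
  suff -> : mv_continuity_points F = hits_small_balls F setT.
    exact: Gdelta_hits_small_balls.
  apply/seteqP; split=> x; rewrite /mv_continuity_points /= mv_continuous_atE.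
    by move=> [y [_ ly]]; apply: lower_limit_hits_small_balls ly filterT.
  exact: hits_small_balls_lower_limit (cF x) (@subIsetl _ _ _).
exists (fun m => hits_small_balls F (interior (K m))).
  by move=> m; exact: Gdelta_hits_small_balls.
apply/seteqP; split=> x; rewrite /mv_continuity_points /= mv_continuous_atE.
  move=> [y [_ ly]]; have [m _ Kmy] : (\bigcup_n K n) y by rewrite KT.
  exists m.+1 => //; apply: lower_limit_hits_small_balls ly _.
  exact/nbhs_interior/KK.
move=> [m _ hx]; have [y [_ ly]] : K m `&` lower_limit F x !=set0.
  by apply: hits_small_balls_lower_limit (cK m) _ hx => y [_ /interior_subset].
by exists y; split=> //; apply: clF; exact: lower_limit_closure ly.
Qed.
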